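(* Let $(R,\cdot,\mathfrak e)$ be a partial $A$-module algebra. Then the product of the smash product $R\#A$ is left nondegenerate: if $\xi\in R\#A$ satisfies $(x\#a)\xi=0$ for all $x\in R$ and $a\in A$, then $\xi=0$.
   Context: $\Bbbk$ is a field; $M(R)$ is the multiplier algebra of an algebra $R$ with nondegenerate product. $A$ is a regular multiplier Hopf algebra with comultiplication $\Delta$, counit $\varepsilon$, bijective antipode $S$. A partial $A$-module algebra is a triple $(R,\cdot,\mathfrak e)$, $\cdot:A\otimes R\to R$ and $\mathfrak e:A\to M(R)$ linear, such that for all $a,b\in A$, $x,y\in R$: (i) $a\cdot(x(b\cdot y))=(a_{(1)}\cdot x)(a_{(2)}b\cdot y)$; (ii) $\mathfrak e(a)(b\cdot x)=a_{(1)}\cdot(S(a_{(2)})b\cdot x)$ and $\mathfrak e(A)R\subseteq A\cdot R$; (iii) given $a_1,\dots,a_n\in A$, $x_1,\dots,x_m\in R$ there is $b\in A$ with $a_ib=a_i=ba_i$ and $a_i\cdot x_j=a_i\cdot(b\cdot x_j)$; (iv) $A\cdot x=0$ implies $x=0$. The smash product $R\#A$ is the vector space $R\otimes A$ with product $(x\#a)(y\#b)=x(a_{(1)}\cdot y)\#a_{(2)}b$. *)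

(* Algebras here are NON-UNITAL, possibly infinite-dimensional
   algebras over a field K, so they are modelled as an lmodType K together with
   a bilinear associative product (MathComp rings are unital, hence unusable). *)
From HB Require Import structures.
From mathcomp Require Import all_boot all_algebra.
Set Implicit Arguments. Unset Strict Implicit. Unset Printing Implicit Defensive.
Import GRing.Theory.
Local Open Scope ring_scope.

Section Defs.
Variable K : fieldType.

Definition lin_functional (U : lmodType K) (f : U -> K) : Prop :=
  forall (c : K) (u v : U), f (c *: u + v) = c * f u + f v.

(* Two formal sums denote the same tensor iff they have
   the same image under the canonical injective map U (x) V -> Hom(U^*, V),
   u (x) v |-> (f |-> f(u) v), which is injective over a field. *)
Definition tensor (U V : lmodType K) := seq (U * V).

Definition teq (U V : lmodType K) (s t : tensor U V) : Prop :=
  forall f : U -> K, lin_functional f ->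
    \sum_(p <- s) f p.1 *: p.2 = \sum_(p <- t) f p.1 *: p.2.

Definition teq3 (U V W : lmodType K) (s t : seq (U * V * W)) : Prop :=
  forall (f : U -> K) (g : V -> K), lin_functional f -> lin_functional g ->
    \sum_(p <- s) (f p.1.1 * g p.1.2) *: p.2
  = \sum_(p <- t) (f p.1.1 * g p.1.2) *: p.2.

Definition tscale (U V : lmodType K) (c : K) (z : tensor U V) : tensor U V :=
  [seq (c *: p.1, p.2) | p <- z].

Record nalg := NAlg {
  ncar :> lmodType K;
  nmul : ncar -> ncar -> ncar;
  nmulA : forall x y z, nmul x (nmul y z) = nmul (nmul x y) z;
  nmul_linl : forall (c : K) x y z, nmul (c *: x + y) z = c *: nmul x z + nmul y z;
  nmul_linr : forall (c : K) x y z, nmul z (c *: x + y) = c *: nmul z x + nmul z y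
}.

Definition nondegenerate (R : nalg) : Prop :=
  (forall x : R, (forall y : R, nmul x y = 0) -> x = 0) /\
  (forall x : R, (forall y : R, nmul y x = 0) -> x = 0).

(* ---------------- multiplier algebra M(R) (double centralisers) ----------
   m = (mL m, mR m) with  mL m x = m x  and  mR m x = x m. *)
Record multiplier (R : nalg) := Mult { mL : R -> R; mR : R -> R }.

Definition is_multiplier (R : nalg) (m : multiplier R) : Prop :=
  [/\ forall (c : K) (x y : R), mL m (c *: x + y) = c *: mL m x + mL m y,
      forall (c : K) (x y : R), mR m (c *: x + y) = c *: mR m x + mR m y,
      forall x y : R, mL m (nmul x y) = nmul (mL m x) y,
      forall x y : R, mR m (nmul x y) = nmul x (mR m y) &
      forall x y : R, nmul x (mL m y) = nmul (mR m x) y].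

Section TensorAlg.
Variable A : nalg.

Definition tmul (s t : tensor A A) : tensor A A :=
  [seq (nmul p.1 q.1, nmul p.2 q.2) | p <- s, q <- t].
(* (a (x) 1) z,  z (a (x) 1),  (1 (x) b) z,  z (1 (x) b) *)
Definition lA (a : A) (z : tensor A A) : tensor A A := [seq (nmul a p.1, p.2) | p <- z].
Definition rA (z : tensor A A) (a : A) : tensor A A := [seq (nmul p.1 a, p.2) | p <- z].
Definition l1 (b : A) (z : tensor A A) : tensor A A := [seq (p.1, nmul b p.2) | p <- z].
Definition r1 (z : tensor A A) (b : A) : tensor A A := [seq (p.1, nmul p.2 b) | p <- z].
End TensorAlg.

(* ---------------- regular multiplier Hopf algebras (Van Daele) -----------
   Dl a z = Delta(a) z  and  Dr a z = z Delta(a)  (Delta(a) in M(A (x) A));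
   D1 a b = Delta(a)(1 (x) b),  D2 a b = (a (x) 1)Delta(b),
   D3 a b = Delta(a)(b (x) 1),  D4 a b = (1 (x) a)Delta(b)   (in A (x) A);
   eps = counit, S = antipode, Sinv = its inverse. *)
Record mha_data (A : nalg) := MHAData {
  Dl : A -> tensor A A -> tensor A A;
  Dr : A -> tensor A A -> tensor A A;
  D1 : A -> A -> tensor A A;
  D2 : A -> A -> tensor A A;
  D3 : A -> A -> tensor A A;
  D4 : A -> A -> tensor A A;
  eps : A -> K;
  antipode : A -> A;
  antipode_inv : A -> A
}.

Definition Tmap (A : nalg) (D : A -> A -> tensor A A) (z : tensor A A) : tensor A A :=
  flatten [seq D p.1 p.2 | p <- z].

Definition tbijective (A : nalg) (T : tensor A A -> tensor A A) : Prop :=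
  (forall z z', teq (T z) (T z') -> teq z z') /\
  (forall w, exists z, teq (T z) w).

Record regular_mha (A : nalg) (H : mha_data A) : Prop := {
  rmha_nondeg : nondegenerate A;
  (* each Delta(a) is a multiplier of A (x) A *)
  Dl_wd : forall a z z', teq z z' -> teq (Dl H a z) (Dl H a z');
  Dr_wd : forall a z z', teq z z' -> teq (Dr H a z) (Dr H a z');
  Dl_lin : forall a c z z', teq (Dl H a (tscale c z ++ z')) (tscale c (Dl H a z) ++ Dl H a z');
  Dr_lin : forall a c z z', teq (Dr H a (tscale c z ++ z')) (tscale c (Dr H a z) ++ Dr H a z');
  Dl_mul : forall a z z', teq (Dl H a (tmul z z')) (tmul (Dl H a z) z');
  Dr_mul : forall a z z', teq (Dr H a (tmul z z')) (tmul z (Dr H a z'));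
  DlDr : forall a z z', teq (tmul z (Dl H a z')) (tmul (Dr H a z) z');
  Delta_linl : forall (c : K) a b z, teq (Dl H (c *: a + b) z) (tscale c (Dl H a z) ++ Dl H b z);
  Delta_linr : forall (c : K) a b z, teq (Dr H (c *: a + b) z) (tscale c (Dr H a z) ++ Dr H b z);
  Delta_mull : forall a b z, teq (Dl H (nmul a b) z) (Dl H a (Dl H b z));
  Delta_mulr : forall a b z, teq (Dr H (nmul a b) z) (Dr H b (Dr H a z));
  D1_spec : forall a b z, teq (Dl H a (l1 b z)) (tmul (D1 H a b) z) /\
                          teq (r1 (Dr H a z) b) (tmul z (D1 H a b));
  D2_spec : forall a b z, teq (lA a (Dl H b z)) (tmul (D2 H a b) z) /\
                          teq (Dr H b (rA z a)) (tmul z (D2 H a b));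
  D3_spec : forall a b z, teq (Dl H a (lA b z)) (tmul (D3 H a b) z) /\
                          teq (rA (Dr H a z) b) (tmul z (D3 H a b));
  D4_spec : forall a b z, teq (l1 a (Dl H b z)) (tmul (D4 H a b) z) /\
                          teq (Dr H b (r1 z a)) (tmul z (D4 H a b));
  (* coassociativity:
     (a(x)1(x)1)(Delta(x)id)(Delta(b)(1(x)c)) = (id(x)Delta)((a(x)1)Delta(b))(1(x)1(x)c) *)
  coassoc : forall a b c,
    teq3 [seq (u.1, u.2, p.2) | p <- D1 H b c, u <- D2 H a p.1]
         [seq (p.1, t.1, t.2) | p <- D2 H a b, t <- D1 H p.2 c];
  (* multiplier Hopf algebra: T1, T2 bijective; regular: also for Delta^cop *)
  T1_bij : tbijective (Tmap (D1 H));
  T2_bij : tbijective (Tmap (D2 H));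
  T3_bij : tbijective (Tmap (D3 H));
  T4_bij : tbijective (Tmap (D4 H));
  eps_lin : lin_functional (eps H);
  eps_mul : forall a b, eps H (nmul a b) = eps H a * eps H b;
  eps_l : forall a b, \sum_(p <- D1 H a b) eps H p.1 *: p.2 = nmul a b;
  eps_r : forall a b, \sum_(p <- D2 H a b) eps H p.2 *: p.1 = nmul a b;
  S_lin : forall (c : K) a b, antipode H (c *: a + b) = c *: antipode H a + antipode H b;
  S_l : forall a b, \sum_(p <- D1 H a b) nmul (antipode H p.1) p.2 = eps H a *: b;
  S_r : forall a b, \sum_(p <- D2 H a b) nmul p.1 (antipode H p.2) = eps H b *: a;
  S_invl : forall a, antipode_inv H (antipode H a) = a;
  S_invr : forall a, antipode H (antipode_inv H a) = a
}.

Record partial_module_algebra (A : nalg) (H : mha_data A) (R : nalg)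
    (act : A -> R -> R) (e : A -> multiplier R) : Prop := {
  R_nondeg : nondegenerate R;
  act_linl : forall (c : K) a b x, act (c *: a + b) x = c *: act a x + act b x;
  act_linr : forall (c : K) a x y, act a (c *: x + y) = c *: act a x + act a y;
  e_mult : forall a, is_multiplier (e a);
  e_linL : forall (c : K) a b y, mL (e (c *: a + b)) y = c *: mL (e a) y + mL (e b) y;
  e_linR : forall (c : K) a b y, mR (e (c *: a + b)) y = c *: mR (e a) y + mR (e b) y;
  pma_i : forall a b x y,
    act a (nmul x (act b y)) = \sum_(p <- D1 H a b) nmul (act p.1 x) (act p.2 y);
  (* (ii) e(a)(b.x) = a_(1).(S(a_(2))b.x), where
          a_(1) (x) S(a_(2))b = (id (x) S)((1 (x) S^-1(b))Delta(a)) *)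
  pma_ii : forall a b x,
    mL (e a) (act b x) = \sum_(p <- D4 H (antipode_inv H b) a) act p.1 (act (antipode H p.2) x);
  pma_ii' : forall a y, exists s : seq (A * R), mL (e a) y = \sum_(p <- s) act p.1 p.2;
  pma_iii : forall (as_ : seq A) (xs : seq R), exists b : A,
    forall a, a \in as_ -> [/\ nmul a b = a, nmul b a = a &
                              forall x, x \in xs -> act a x = act a (act b x)];
  pma_iv : forall x : R, (forall a : A, act a x = 0) -> x = 0
}.

(* ---------------- the smash product R # A ----------------
   (x # a) xi  for xi = sum_i y_i # b_i :
   sum_i x(a_(1).y_i) # a_(2) b_i, with a_(1) (x) a_(2)b_i = Delta(a)(1 (x) b_i). *)
Definition smash_lmul (A : nalg) (H : mha_data A) (R : nalg) (act : A -> R -> R)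
    (x : R) (a : A) (xi : tensor R A) : tensor R A :=
  flatten [seq [seq (nmul x (act q.1 p.1), q.2) | q <- D1 H a p.2] | p <- xi].

End Defs.

(* Write xi = sum_i y_i # b_i.  For a functional f on R and x in R, the functionals
   phi_i : c |-> f (x (c . y_i)) on A satisfy sum_i (phi_i (x) id)(Delta(a)(1 (x) b_i)) = 0
   for every a.  Multiplying on the left by c turns Delta(a)(1 (x) b_i) into
   ((1 (x) c)Delta(a))(1 (x) b_i); since the elements (1 (x) c)Delta(a) span A (x) A
   (surjectivity of T4) and the product of A is nondegenerate, sum_i phi_i(a) b_i = 0 for
   every a.  Pairing with a functional g on A, w = sum_i g(b_i) y_i satisfies
   x (a . w) = 0 for all x and a, hence w = 0 by nondegeneracy of R and axiom (iv).
   Tensors are compared through functionals, which separate points of a vector space by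
   Zorn's lemma. *)

From Pilot Require Import Defs.
From HB Require Import structures.
From mathcomp Require Import all_boot all_algebra.
From mathcomp Require Import boolp classical_sets.
Set Implicit Arguments. Unset Strict Implicit. Unset Printing Implicit Defensive.
Import GRing.Theory.
Local Open Scope ring_scope.

Section LinearFor.
Variables (K : fieldType) (U : lmodType K) (V : zmodType) (s : GRing.Scale.law K V).
Variable h : U -> V.
Hypothesis h_linear : linear_for s h.

Let hL : {linear U -> V | s} := HB.pack h (GRing.isLinear.Build K U V s h h_linear).

Lemma linear_for0 : h 0 = 0. Proof. exact: linear0 hL. Qed.
Lemma linear_forB : {morph h : x y / x - y}. Proof. exact: linearB hL. Qed.
Lemma linear_forZ c u : h (c *: u) = s c (h u). Proof. exact: (linearZ_LR hL c u). Qed.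
Lemma linear_for_sum I (r : seq I) (F : I -> U) :
  h (\sum_(i <- r) F i) = \sum_(i <- r) h (F i).
Proof. exact: (linear_sum hL). Qed.

End LinearFor.

Section LinClosed.
Variables (K : fieldType) (V : lmodType K).

Definition lin_closed (W : set V) := forall (c : K) x y, W x -> W y -> W (c *: x + y).

Variable W : set V.
Hypothesis W_closed : lin_closed W.

Lemma lin_closed0 x : W x -> W 0.
Proof. by move=> Wx; have := W_closed (-1) Wx Wx; rewrite scaleN1r addNr. Qed.

Lemma lin_closedZ c x : W x -> W (c *: x).
Proof. by move=> Wx; rewrite -[_ *: x]addr0; exact: W_closed (lin_closed0 Wx). Qed.

Lemma lin_closedB x y : W x -> W y -> W (x - y).
Proof. by move=> Wx Wy; rewrite addrC -scaleN1r; exact: W_closed. Qed.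

End LinClosed.

Section Separation.
Variables (K : fieldType) (V : lmodType K).
Local Open Scope classical_set_scope.

(* Zorn's lemma yields a maximal subspace avoiding v; maximality forces it to be a
   hyperplane complementary to the line through v. *)
Lemma exists_hyperplane_avoiding (v : V) : v != 0 ->
  exists W : set V, [/\ lin_closed W, ~ W v & forall u, exists c, W (u - c *: v)].
Proof.
move=> v0; pose P := [set W : set V | lin_closed W /\ ~ W v].
have [|W [[W_closed Wv] Wmax]] := @Zorn_bigcup V P.
  move=> F FP Ftot; split; last by case=> W FW; apply: (FP W FW).2.
  move=> c x y [Wx Fx xWx] [Wy Fy yWy].
  have [Wxy|Wyx] := Ftot _ _ Fx Fy.
  - by exists Wy => //; apply: (FP _ Fy).1 => //; exact: Wxy.
  - by exists Wx => //; apply: (FP _ Fx).1 => //; exact: Wyx.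
have W0 : W 0.
  apply: contrapT => W0; apply: (Wmax [set 0]); last first.
    split; first by move=> c x y -> ->; rewrite scaler0 addr0.
    by move=> /eqP; rewrite (negbTE v0).
  split; last by move/(_ 0 erefl).
  by move=> x Wx; exfalso; exact/W0/(lin_closed0 W_closed Wx).
exists W; split=> // u.
pose B := [set y | exists x c, W x /\ y = x + c *: u].
have [[x [c [Wx vE]]]|nBv] := pselect (B v).
  have c0 : c != 0 by apply: contraPneq Wv => c0; rewrite vE c0 scale0r addr0.
  exists c^-1; rewrite vE scalerDr scalerA mulVf // scale1r opprD addrA addrAC subrr add0r.
  by rewrite -scaleNr; exact: lin_closedZ.
exists 0; rewrite scale0r subr0.
have B_closed : lin_closed B.
  move=> c y1 y2 [x1 [c1 [Wx1 ->]]] [x2 [c2 [Wx2 ->]]].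
  exists (c *: x1 + x2), (c * c1 + c2); split; first exact: W_closed.
  by rewrite scalerDr scalerA addrACA scalerDl.
have WB : W `<=` B by move=> x Wx; exists x, 0; rewrite scale0r addr0.
have BW : B `<=` W.
  by apply: contrapT => nBW; apply: (Wmax B) => //; split.
by apply: BW; exists 0, 1; rewrite scale1r add0r.
Qed.

Lemma exists_lin_functional_eq1 (v : V) : v != 0 ->
  exists f : V -> K, lin_functional f /\ f v = 1.
Proof.
move=> v0; have [W [W_closed Wv Wspan]] := exists_hyperplane_avoiding v0.
have [f Wf] := choice Wspan.
have coordE u c : W (u - c *: v) -> f u = c.
  move=> Wc; apply/eqP; rewrite -subr_eq0; apply: contra_notT Wv => fc.
  have := lin_closedB W_closed Wc (Wf u).
  rewrite opprB addrC addrA subrK -scalerBl => /(lin_closedZ W_closed (f u - c)^-1).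
  by rewrite scalerK.
exists f; split=> [c u w|]; apply: coordE.
  rewrite scalerDl -scalerA opprD addrACA -scalerBr.
  exact: W_closed (Wf u) (Wf w).
by rewrite scale1r subrr; exact: lin_closed0 W_closed _ (Wf v).
Qed.

Lemma lin_functional_separates (u w : V) :
  (forall f : V -> K, lin_functional f -> f u = f w) -> u = w.
Proof.
move=> uw; apply/eqP; rewrite -subr_eq0; apply/negPn/negP => /exists_lin_functional_eq1.
by case=> f [lf]; rewrite (linear_forB lf) uw // subrr => /eqP; rewrite eq_sym oner_eq0.
Qed.

End Separation.

Section Slices.
Variable K : fieldType.
Implicit Types U V : lmodType K.

Definition slice U V (phi : U -> K) (s : tensor U V) : V := \sum_(p <- s) phi p.1 *: p.2.

Definition tflip U V (s : tensor U V) : tensor V U := [seq (p.2, p.1) | p <- s].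

Lemma teqP U V (s t : tensor U V) :
  teq s t <-> forall phi, lin_functional phi -> slice phi s = slice phi t.
Proof. by []. Qed.

Lemma slice_nil U V (phi : U -> K) : slice phi [::] = 0 :> V.
Proof. exact: big_nil. Qed.

Lemma teq_sym U V (s t : tensor U V) : teq s t -> teq t s.
Proof. by move=> st phi lphi; rewrite st. Qed.

Lemma teq_trans U V (s t w : tensor U V) : teq s t -> teq t w -> teq s w.
Proof. by move=> st tw phi lphi; rewrite st ?tw. Qed.

Lemma linear_slice U V (W : lmodType K) (h : V -> W) (phi : U -> K) (s : tensor U V) :
  linear h -> h (slice phi s) = slice phi [seq (p.1, h p.2) | p <- s].
Proof.
move=> h_lin; rewrite /slice big_map (linear_for_sum h_lin).
by apply: eq_bigr => p _; rewrite (linear_forZ h_lin).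
Qed.

Lemma lin_functional_slice U V (phi : U -> K) (g : V -> K) (s : tensor U V) :
  lin_functional phi -> lin_functional g ->
  g (slice phi s) = phi (slice g (tflip s)).
Proof.
move=> lphi lg; rewrite /slice big_map (linear_for_sum lg) (linear_for_sum lphi).
by apply: eq_bigr => p _; rewrite (linear_forZ lphi) (linear_forZ lg) /= mulrC.
Qed.

Lemma tflipK U V : cancel (@tflip U V) (@tflip V U).
Proof. by move=> s; rewrite /tflip -map_comp map_id_in // => -[]. Qed.

Lemma teq_flip U V (s t : tensor U V) : teq s t -> teq (tflip s) (tflip t).
Proof.
move=> /teqP st g lg; apply: lin_functional_separates => phi lphi.
by rewrite -!lin_functional_slice // st.
Qed.

Lemma teq0_of_separating U U' V (I : Type) (h : I -> U -> U') (s : tensor U V) :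
  (forall i, linear (h i)) -> (forall u, (forall i, h i u = 0) -> u = 0) ->
  (forall i, teq [seq (h i p.1, p.2) | p <- s] [::]) -> teq s [::].
Proof.
move=> h_lin h_sep hs; apply/teqP => f lf; rewrite slice_nil.
apply: lin_functional_separates => g lg; rewrite lin_functional_slice // (linear_for0 lg).
suff -> : slice g (tflip s) = 0 by rewrite (linear_for0 lf).
apply: h_sep => i; apply: lin_functional_separates => f' lf'.
rewrite (linear_for0 lf') (linear_slice _ _ (h_lin i)) lin_functional_slice //.
have -> : tflip [seq (p.1, h i p.2) | p <- tflip s] = [seq (h i p.1, p.2) | p <- s].
  by rewrite /tflip -!map_comp.
by move/teqP: (hs i) => ->; rewrite // slice_nil (linear_for0 lg).
Qed.

End Slices.

Section NonunitalAlgebra.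
Variables (K : fieldType) (A : nalg K).
Implicit Types (s t z : tensor A A) (phi : A -> K).

Lemma nmul_linearr (x : A) : linear (nmul x).
Proof. by move=> c u w; rewrite nmul_linr. Qed.

Lemma nmul_linearl (y : A) : linear (fun x : A => nmul x y).
Proof. by move=> c u w; rewrite nmul_linl. Qed.

Lemma slice_l1 phi c s : slice phi (l1 c s) = nmul c (slice phi s).
Proof. by rewrite (linear_slice _ _ (nmul_linearr c)). Qed.

Lemma slice_r1 phi s b : slice phi (r1 s b) = nmul (slice phi s) b.
Proof. by rewrite (linear_slice _ _ (nmul_linearl b)). Qed.

Lemma teq_l1 c s t : teq s t -> teq (l1 c s) (l1 c t).
Proof. by move=> /teqP st; apply/teqP => phi lphi; rewrite !slice_l1 st. Qed.

Lemma tflip_rA s a : tflip (rA s a) = r1 (tflip s) a.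
Proof. by rewrite /tflip /r1 -!map_comp. Qed.

Lemma tmul_seq1 s a b : tmul s [:: (a, b)] = rA (r1 s b) a.
Proof. by rewrite /tmul allpairs1r /rA /r1 -map_comp. Qed.

Lemma tmul_l1 c s z : tmul (l1 c s) z = l1 c (tmul s z).
Proof.
rewrite /tmul /l1 allpairs_mapl map_allpairs.
by apply: eq_allpairs => p q /=; rewrite nmulA.
Qed.

Lemma tmul_r1 s b z : tmul (r1 s b) z = tmul s (l1 b z).
Proof.
rewrite /tmul /r1 /l1 allpairs_mapl allpairs_mapr.
by apply: eq_allpairs => p q /=; rewrite nmulA.
Qed.

Hypothesis A_nondeg : Defs.nondegenerate A.

Lemma teq_r1_cancel s t : (forall b, teq (r1 s b) (r1 t b)) -> teq s t.
Proof.
move=> st; apply/teqP => phi lphi; apply/eqP; rewrite -subr_eq0; apply/eqP.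
apply: A_nondeg.1 => b; rewrite (linear_forB (nmul_linearl b)) -!slice_r1.
by move/teqP: (st b) => ->; rewrite ?subrr.
Qed.

Lemma teq_rA_cancel s t : (forall a, teq (rA s a) (rA t a)) -> teq s t.
Proof.
move=> st; rewrite -(tflipK s) -(tflipK t); apply: teq_flip.
by apply: teq_r1_cancel => a; rewrite -!tflip_rA; exact: teq_flip.
Qed.

Lemma teq_tmul_cancel s t : (forall z, teq (tmul s z) (tmul t z)) -> teq s t.
Proof.
move=> st; apply: teq_r1_cancel => b; apply: teq_rA_cancel => a.
by rewrite -!tmul_seq1.
Qed.

End NonunitalAlgebra.

Section MultiplierHopfAlgebra.
Variables (K : fieldType) (A : nalg K) (H : mha_data A).
Hypothesis HA : regular_mha H.

(* both sides are (1 (x) c) Delta(a) (1 (x) b) *)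
Lemma l1_D1_r1_D4 a b c : teq (l1 c (D1 H a b)) (r1 (D4 H c a) b).
Proof.
apply: (teq_tmul_cancel (rmha_nondeg HA)) => z; rewrite tmul_l1 tmul_r1.
apply: teq_trans (proj1 (D4_spec HA c a (l1 b z))).
exact/teq_l1/teq_sym/(D1_spec HA a b z).1.
Qed.

Lemma slice_Tmap (D : A -> A -> tensor A A) phi z :
  slice phi (Tmap D z) = \sum_(k <- z) slice phi (D k.1 k.2).
Proof. by rewrite /slice big_flatten big_map. Qed.

Lemma sum_scale_eq0_of_slice_D1 (I : Type) (r : seq I) (phi : I -> A -> K) (b : I -> A) :
  (forall i, lin_functional (phi i)) ->
  (forall a, \sum_(i <- r) slice (phi i) (D1 H a (b i)) = 0) ->
  forall a, \sum_(i <- r) phi i a *: b i = 0.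
Proof.
move=> phi_lin hD1 a; apply: (rmha_nondeg HA).2 => d.
pose Theta w := \sum_(i <- r) nmul (slice (phi i) w) (b i).
have Theta_D4 c a' : Theta (D4 H c a') = 0.
  rewrite -(linear_for0 (nmul_linearr c)) -(hD1 a') (linear_for_sum (nmul_linearr c)).
  apply: eq_bigr => i _; rewrite -slice_l1 -slice_r1.
  by move/teqP: (l1_D1_r1_D4 a' (b i) c) => ->.
have [z /teqP Tz] := (T4_bij HA).2 [:: (a, d)].
transitivity (Theta [:: (a, d)]).
  rewrite (linear_for_sum (nmul_linearr d)); apply: eq_bigr => i _.
  by rewrite /slice big_seq1 (linear_forZ (nmul_linearr d)) (linear_forZ (nmul_linearl _)).
rewrite /Theta.
under eq_bigr => i _ do rewrite -Tz // slice_Tmap (linear_for_sum (nmul_linearl _)).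
by rewrite exchange_big big1 // => k _; exact: Theta_D4.
Qed.

End MultiplierHopfAlgebra.

Lemma slice_smash_lmul (K : fieldType) (A : nalg K) (H : mha_data A) (R : nalg K)
    (act : A -> R -> R) (f : R -> K) (x : R) (a : A) (xi : tensor R A) :
  slice f (smash_lmul H act x a xi)
  = \sum_(p <- xi) slice (fun c => f (nmul x (act c p.1))) (D1 H a p.2).
Proof. by rewrite /slice big_flatten big_map; apply: eq_bigr => p _; rewrite big_map. Qed.

Theorem mainTheorem14 (K : fieldType) (A : nalg K) (H : mha_data A)
    (HA : regular_mha H) (R : nalg K) (act : A -> R -> R) (e : A -> multiplier R)
    (HR : partial_module_algebra H act e) (xi : tensor R A) :
  (forall (x : R) (a : A), teq (smash_lmul H act x a xi) [::]) ->
  teq xi [::].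
Proof.
move=> xi_ann.
apply: (teq0_of_separating (h := fun (xa : R * A) y => nmul xa.1 (act xa.2 y))).
- by move=> [x a] c u w; rewrite /= (act_linr HR) nmul_linr.
- move=> y y_ann; apply: (pma_iv HR) => a; apply: (R_nondeg HR).2 => x.
  exact: (y_ann (x, a)).
move=> [x a]; apply/teqP => f lf; rewrite slice_nil /slice big_map.
apply: (sum_scale_eq0_of_slice_D1 HA (phi := fun p c => f (nmul x (act c p.1))) (b := snd)).
- by move=> p c u w; rewrite (act_linl HR) nmul_linr lf.
move=> a'; rewrite -(slice_smash_lmul H act f x a').
by move/teqP: (xi_ann x a') => ->; rewrite ?slice_nil.
Qed.
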